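(* Let $K$ be a compact Hausdorff topological space and $\kappa$ an infinite cardinal. If $C(K)$ admits an equivalent norm $|||\cdot|||$ such that $(C(K),|||\cdot|||)$ is $\mathrm{ASQ}_{<\kappa}$, then $C(K)$ contains an isomorphic copy of $c_0(\kappa)$.
   Context: $C(K)$ is the space of real-valued continuous functions on $K$ with the supremum norm. A Banach space $Z$ is $\mathrm{ASQ}_{<\kappa}$ if for every set $A\subset S_Z$ with $|A|<\kappa$ and every $\varepsilon>0$ there exists $y\in S_Z$ with $\|x\pm y\|\le 1+\varepsilon$ for all $x\in A$. *)

From HB Require Import structures.
From mathcomp Require Import all_boot all_order all_algebra.
From mathcomp Require Import all_classical all_reals all_analysis.
Set Implicit Arguments. Unset Strict Implicit. Unset Printing Implicit Defensive.
Import Order.TTheory GRing.Theory Num.Theory.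
Import numFieldNormedType.Exports.
Local Open Scope classical_set_scope.
Local Open Scope ring_scope.

(* Cardinal comparison |A| < |B| for sets (possibly in different types):
   injection A -> B and no injection B -> A (Cantor-Schroeder-Bernstein). *)
Definition card_lt T U (A : set T) (B : set U) : Prop :=
  (A #<= B)%card /\ ~ (B #<= A)%card.

(* The sup norm on C(K) (K compact, so the sup is attained/finite on continuous f). *)
Definition supnorm (R : realType) (K : topologicalType) (f : K -> R) : R :=
  sup (range (fun x => `|f x|)).

Definition is_norm_CK (R : realType) (K : topologicalType) (N : (K -> R) -> R) : Prop :=
  (forall f g : K -> R, continuous f -> continuous g ->
     N (fun x => f x + g x) <= N f + N g) /\
  (forall (a : R) (f : K -> R), continuous f ->
     N (fun x => a * f x) = `|a| * N f) /\
  (forall f : K -> R, continuous f -> N f = 0 -> f = (fun _ => 0)).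

Definition equiv_norm_CK (R : realType) (K : topologicalType) (N : (K -> R) -> R) : Prop :=
  is_norm_CK N /\
  exists c C : R, 0 < c /\ 0 < C /\
    forall f : K -> R, continuous f ->
      c * supnorm f <= N f /\ N f <= C * supnorm f.

(* (C(K), N) is ASQ_{<kappa}, where the cardinal kappa is |I|. *)
Definition ASQ_lt (R : realType) (K : topologicalType) (N : (K -> R) -> R)
    (I : Type) : Prop :=
  forall A : set (K -> R),
    A `<=` [set f | continuous f /\ N f = 1] ->
    card_lt A [set: I] ->
    forall eps : R, 0 < eps ->
      exists y : K -> R, continuous y /\ N y = 1 /\
        forall x, A x ->
          N (fun t => x t + y t) <= 1 + eps /\ N (fun t => x t - y t) <= 1 + eps.

Definition c0 (R : realType) (I : Type) : set (I -> R) :=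
  [set x | forall eps : R, 0 < eps -> finite_set [set i | eps <= `|x i|]].

Definition c0norm (R : realType) (I : Type) (x : I -> R) : R :=
  sup (range (fun i => `|x i|)).

Definition contains_c0 (R : realType) (K : topologicalType) (I : Type) : Prop :=
  exists T : (I -> R) -> (K -> R),
    (forall x, @c0 R I x -> continuous (T x)) /\
    (forall (a : R) (x y : I -> R), @c0 R I x -> @c0 R I y ->
       T (fun i => a * x i + y i) = (fun t => a * T x t + T y t)) /\
    exists m M : R, 0 < m /\ 0 < M /\
      forall x, @c0 R I x ->
        m * c0norm x <= supnorm (T x) /\ supnorm (T x) <= M * c0norm x.

(* By Zorn's lemma there is a maximal family Y0 of norm-one functions such that
   every signed sum of k <= n distinct members has norm at most 1 + k/n.  If
   |Y0| < kappa, the normalized signed sums of fewer than n members form fewer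
   than kappa unit vectors (by Hessenberg's theorem |X * X| = |X|), and the
   vector that ASQ_{<kappa} provides for them with eps = 1/(2n) could be added
   to Y0; hence |Y0| >= kappa.  As the norm is equivalent to the sup norm, every
   member of Y0 exceeds delta = 1/(2C) in modulus somewhere, while fewer than n
   members do so at a common point.  Maximal cliques of members with a common
   such point then have pairwise disjoint peak regions, there are at least kappa
   of them, and the products of the (|z| - delta)^+ over the members z of a
   clique are disjointly supported bumps spanning an isometric copy of
   c_0(kappa). *)

From HB Require Import structures.
From mathcomp Require Import all_boot all_order all_algebra.
From mathcomp Require Import all_classical all_reals all_analysis.
From mathcomp Require Import ring lra.
Set Implicit Arguments. Unset Strict Implicit. Unset Printing Implicit Defensive.
Import Order.TTheory GRing.Theory Num.Theory.
Import numFieldNormedType.Exports.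
Local Open Scope classical_set_scope.
Local Open Scope ring_scope.

(** * Cardinal arithmetic *)

Definition injects T U (A : set T) (B : set U) :=
  exists2 f : T -> U, set_fun A B f & set_inj A f.

Lemma injects_card_le T U (A : set T) (B : set U) : injects A B -> (A #<= B)%card.
Proof. by move=> /injfunPex[g]; exact: inj_card_le. Qed.

Lemma card_le_injects T U (A : set T) (B : set U) (u0 : U) :
  (A #<= B)%card -> injects A B.
Proof. by case/card_leP=> g; apply/injfunPex; squash (valLR u0 g). Qed.

Lemma injects_trans T U V (A : set T) (B : set U) (C : set V) :
  injects A B -> injects B C -> injects A C.
Proof.
move=> [f fAB fi] [g gBC gi]; exists (g \o f) => [x Ax|x y Ax Ay /= /gi gfxy].
  exact/gBC/fAB.
by apply: fi => //; apply: gfxy; apply/mem_set/fAB/set_mem.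
Qed.

Lemma injects_sub T (A B : set T) : A `<=` B -> injects A B.
Proof. by exists id. Qed.

Lemma injects_setX T T' U U' (A : set T) (A' : set T') (B : set U) (B' : set U') :
  injects A B -> injects A' B' -> injects (A `*` A') (B `*` B').
Proof.
move=> [f fA fi] [g gA gi]; exists (fun p => (f p.1, g p.2)).
  by move=> [a a'] [/= Aa Aa']; split; [exact: fA|exact: gA].
move=> [a a'] [b b'] /set_mem[/= Aa Aa'] /set_mem[/= Ab Ab'] [fab gab].
by rewrite (fi a b (mem_set Aa) (mem_set Ab) fab) (gi a' b' (mem_set Aa') (mem_set Ab') gab).
Qed.

Lemma choice_on T U (A : set T) (P : T -> U -> Prop) (u0 : U) :
  (forall x, A x -> exists y, P x y) -> exists f : T -> U, forall x, A x -> P x (f x).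
Proof.
move=> AP; have AP' x : exists y, A x -> P x y.
  by case: (pselect (A x)) => [/AP[y Pxy]|nAx]; [exists y|exists u0].
by have [f fP] := choice AP'; exists f.
Qed.

Lemma injects_image T U (Y : set T) (h : T -> U) (t0 : T) :
  set_inj Y h -> injects (h @` Y) Y.
Proof.
move=> hi; have hY u : (h @` Y) u -> exists y, Y y /\ h y = u.
  by case=> y Yy <-; exists y.
have [k kP] := choice_on t0 hY.
exists k => [u /kP[] //|u v /set_mem/kP[_ Eu] /set_mem/kP[_ Ev] kuv].
by rewrite -Eu -Ev kuv.
Qed.

Definition partial_injection T U (A : set T) (B : set U) (G : set (T * U)) :=
  [/\ G `<=` A `*` B,
      forall x y y', G (x, y) -> G (x, y') -> y = y' &
      forall x x' y, G (x, y) -> G (x', y) -> x = x'].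

Lemma partial_injection_exists_maximal T U (A : set T) (B : set U) :
  exists G, partial_injection A B G /\ forall G', G `<` G' -> ~ partial_injection A B G'.
Proof.
apply: Zorn_bigcup => F FP Ftot; split.
- by move=> p [G /FP[GAB _ _]]; apply: GAB.
- move=> x y y' [G1 F1 H1] [G2 F2 H2].
  case: (Ftot _ _ F1 F2) => sub.
    by have [_ f _] := FP G2 F2; apply: (f x); [exact: sub|].
  by have [_ f _] := FP G1 F1; apply: (f x); [|exact: sub].
- move=> x x' y [G1 F1 H1] [G2 F2 H2].
  case: (Ftot _ _ F1 F2) => sub.
    by have [_ _ i] := FP G2 F2; apply: (i x x' y); [exact: sub|].
  by have [_ _ i] := FP G1 F1; apply: (i x x' y); [|exact: sub].
Qed.

Lemma injects_total T U (A : set T) (B : set U) (t0 : T) (u0 : U) :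
  injects A B \/ injects B A.
Proof.
have [G [[GAB Gf Gi] Gmax]] := partial_injection_exists_maximal A B.
case: (pselect (forall a, A a -> exists b, G (a, b))) => [GA|/existsNP[a]].
  left; have [f fP] := choice_on u0 GA.
  exists f => [a /fP/GAB[]//|a a' /set_mem Aa /set_mem Aa' faa'].
  by apply: (Gi _ _ (f a)); [|rewrite faa']; exact: fP.
move=> /not_implyP[Aa nGa].
case: (pselect (forall b, B b -> exists a, G (a, b))) => [GB|/existsNP[b]].
  right; have [f fP] := choice_on t0 GB.
  exists f => [b /fP/GAB[]//|b b' /set_mem Bb /set_mem Bb' fbb'].
  by apply: (Gf (f b)); [|rewrite fbb']; exact: fP.
move=> /not_implyP[Bb nGb].
have nGa' y : ~ G (a, y) by move=> Gay; apply: nGa; exists y.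
have nGb' x : ~ G (x, b) by move=> Gxb; apply: nGb; exists x.
exfalso; apply: (Gmax (G `|` [set (a, b)])).
  split=> [p Gp|sub]; first by left.
  exact: (nGa' b (sub _ (or_intror erefl))).
split=> [p [/GAB|->]//|x y y'|x x' y].
- move=> [H1|[-> ->]] [H2|[]]; first exact: Gf H1 H2.
  + by move=> Ex _; case: (nGa' y); rewrite -Ex.
  + by case: (nGa' y').
  + by move=> ->.
- move=> [H1|[-> ->]] [H2|[]]; first exact: Gi H1 H2.
  + by move=> -> Ey; case: (nGb' x); rewrite -Ey.
  + by case: (nGb' x').
  + by move=> ->.
Qed.

Lemma injects_setU_bool T (Y Z : set T) :
  injects (Z `\` Y) Y -> injects (Y `|` Z) (Y `*` [set: bool]).
Proof.
move=> [j jY ji]; exists (fun u => if pselect (Y u) then (u, false) else (j u, true)).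
  move=> u YZu; case: pselect => [//|nYu]; split=> //=; apply: jY.
  by split=> //; case: YZu.
move=> u v /set_mem YZu /set_mem YZv.
case: pselect => [Yu|nYu]; case: pselect => [Yv|nYv] // [juv] //.
have Zu : Z u by case: YZu => // /nYu.
have Zv : Z v by case: YZv => // /nYv.
exact: ji (mem_set (conj Zu nYu)) (mem_set (conj Zv nYv)) juv.
Qed.

Lemma injects_square_bool T (Y : set T) (t0 : T) :
  injects (Y `*` Y) Y -> infinite_set Y ->
  injects ((Y `*` [set: bool]) `*` (Y `*` [set: bool])) Y.
Proof.
move=> YYY /infiniteP/(card_le_injects t0) NY.
have BBY : injects ([set: bool] `*` [set: bool]) Y.
  apply: injects_trans NY; exists (fun st : bool * bool => (2 * st.1 + st.2)%N) => //.
  by move=> [[] []] [[] []].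
apply: injects_trans (injects_trans (injects_setX YYY BBY) YYY).
exists (fun q => ((q.1.1, q.2.1), (q.1.2, q.2.2))).
  by move=> [[a s] [b t]] [[Ya _] [Yb _]].
by move=> [[a s] [b t]] [[a' s'] [b' t']] _ _ [-> -> -> ->].
Qed.

Section Hessenberg.
Variables (T : Type) (X : set T).
Hypothesis Xinf : infinite_set X.

Definition graph_dom (G : set ((T * T) * T)) : set T :=
  [set x | exists y z, G ((x, y), z)].

Record pairing_graph (G : set ((T * T) * T)) : Prop := {
  pairing_domX : graph_dom G `<=` X;
  pairing_dom_infinite : graph_dom G !=set0 -> infinite_set (graph_dom G);
  pairing_sub : G `<=` (graph_dom G `*` graph_dom G) `*` graph_dom G;
  pairing_fun : forall p z z', G (p, z) -> G (p, z') -> z = z';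
  pairing_inj : forall p p' z, G (p, z) -> G (p', z) -> p = p';
  pairing_total : forall p, (graph_dom G `*` graph_dom G) p -> exists z, G (p, z) }.

Lemma graph_domS (G G' : set ((T * T) * T)) : G `<=` G' -> graph_dom G `<=` graph_dom G'.
Proof. by move=> GG' x [y [z Gxyz]]; exists y, z; apply: GG'. Qed.

Lemma pairing_extend (G : set ((T * T) * T)) (B : set T) (k : T * T -> T) :
  pairing_graph G -> B `<=` X `\` graph_dom G -> B !=set0 ->
  infinite_set (graph_dom G `|` B) ->
  let W := ((graph_dom G `|` B) `*` (graph_dom G `|` B)) `\` (graph_dom G `*` graph_dom G) in
  set_fun W B k -> set_inj W k ->
  exists2 G', G `<` G' & pairing_graph G'.
Proof.
set D := graph_dom G => -[DX _ GD Gf Gi Gt] BX [b Bb] DBinf W kB ki.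
have nDB x : B x -> ~ D x by move=> /BX[].
pose G' := G `|` [set (p, k p) | p in W].
have WB x : B x -> W (x, x) by move=> Bx; split; [split; right|move=> [/(nDB _ Bx)]].
have domG' : graph_dom G' = D `|` B.
  apply/seteqP; split=> x.
    by move=> [y [z [Gxyz|[[q1 q2] [[/= DBq1 _] _] [<- _ _]]]]]; [left; exists y, z|].
  case=> [[y [z Gxyz]]|Bx]; first by exists y, z; left.
  by exists x, (k (x, x)); right; exists (x, x); [exact: WB|].
exists G'.
  split=> [q Gq|sub]; first by left.
  have /GD[[/(nDB _ Bb)]] // : G ((b, b), k (b, b)).
  by apply: sub; right; exists (b, b); [exact: WB|].
split; rewrite ?domG'.
- by move=> x [/DX|/BX[]].
- by [].
- move=> [p z] [/GD[[Dp1 Dp2] Dz]|[q Wq [<- <-]]].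
    by split; [split; left|left].
  by have [DBq _] := Wq; split=> //; right; exact: kB.
- move=> p z z' [Gz|[q Wq [? ?]]] [Gz'|[q' Wq' [? ?]]]; subst.
  + exact: Gf Gz Gz'.
  + by have [Dp _] := GD _ Gz; case: Wq'.
  + by have [Dp _] := GD _ Gz'; case: Wq.
  + by [].
- have kD p : W p -> ~ D (k p) by move=> /kB/nDB.
  move=> p p' z [Gz|[q Wq [? ?]]] [Gz'|[q' Wq' [? Ekz]]]; subst.
  + exact: Gi Gz Gz'.
  + by have [_ /= /(kD _ Wq')] := GD _ Gz.
  + by have [_ /= /(kD _ Wq)] := GD _ Gz'.
  + by apply: ki; rewrite ?inE.
- move=> p DBp; case: (pselect ((D `*` D) p)) => [/Gt[z Gz]|nDp].
    by exists z; left.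
  by exists (k p); right; exists p.
Qed.

Lemma pairing_graph_exists_maximal :
  exists G, pairing_graph G /\ forall G', G `<` G' -> ~ pairing_graph G'.
Proof.
apply: Zorn_bigcup => F FP Ftot.
have domU : graph_dom (\bigcup_(G in F) G) = \bigcup_(G in F) graph_dom G.
  apply/seteqP; split=> x; first by move=> [y [z [G FG Gxyz]]]; exists G => //; exists y, z.
  by move=> [G FG [y [z Gxyz]]]; exists y, z, G.
split; rewrite ?domU.
- by move=> x [G /FP/pairing_domX]; apply.
- move=> [x [G FG Gx]]; apply: (@sub_infinite_set _ (graph_dom G)) => [y Gy|].
    by exists G.
  by apply: (pairing_dom_infinite (FP G FG)); exists x.
- move=> [[a b] z] [G FG Gabz]; have [[Da Db] Dz] := pairing_sub (FP G FG) Gabz.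
  by split; [split|]; exists G.
- move=> p z z' [G1 F1 H1] [G2 F2 H2]; case: (Ftot _ _ F1 F2) => sub.
    exact: (pairing_fun (FP G2 F2) (sub _ H1) H2).
  exact: (pairing_fun (FP G1 F1) H1 (sub _ H2)).
- move=> p p' z [G1 F1 H1] [G2 F2 H2]; case: (Ftot _ _ F1 F2) => sub.
    exact: (pairing_inj (FP G2 F2) (sub _ H1) H2).
  exact: (pairing_inj (FP G1 F1) H1 (sub _ H2)).
- move=> [a b] [[G1 F1 H1] [G2 F2 H2]]; case: (Ftot _ _ F1 F2) => sub.
    have [z Gz] := pairing_total (FP G2 F2) (conj (graph_domS sub H1) H2).
    by exists z, G2.
  have [z Gz] := pairing_total (FP G1 F1) (conj H1 (graph_domS sub H2)).
  by exists z, G1.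
Qed.

(* A maximal such graph cannot be extended by a copy [B] of [D] inside
   [X `\` D], since [(D `|` B)^2 `\` D^2] injects into [(D `*` bool)^2], hence
   into [D] and [B]; so [X `\` D] injects into [D]. *)
Section MaximalPairing.
Variable G : set ((T * T) * T).
Hypotheses (HG : pairing_graph G) (Gmax : forall G', G `<` G' -> ~ pairing_graph G').
Let D := graph_dom G.

Lemma maximal_pairing_no_extension B : B `<=` X `\` D -> B !=set0 ->
  infinite_set (D `|` B) -> ~ injects (((D `|` B) `*` (D `|` B)) `\` (D `*` D)) B.
Proof.
move=> BX B0 DBinf [k kB ki].
by have [G' GG' HG'] := pairing_extend HG BX B0 DBinf kB ki; exact: Gmax GG' HG'.
Qed.

Lemma maximal_pairing_dom_neq0 : D !=set0.
Proof.
apply: contrapT => nD; have nDx x : ~ D x by move=> Dx; apply: nD; exists x.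
have [t0 _] := infinite_setN0 Xinf.
have [e eX ei] := card_le_injects t0 (proj1 (infiniteP X) Xinf).
have NB : injects [set: nat] (e @` setT) by exists e => // n _; exists n.
have BN := injects_image 0%N ei.
have NNN : injects ([set: nat] `*` [set: nat]) [set: nat].
  apply: (card_le_injects 0%N); rewrite setXTT.
  by have := card_nat2; rewrite card_eq_le => /andP[].
apply: (maximal_pairing_no_extension (B := e @` setT)) => [_ [n _ <-]|||].
- by split; [exact: eX|exact: nDx].
- by exists (e 0%N), 0%N.
- apply: (@sub_infinite_set _ (e @` setT)) => [x Bx|]; first by right.
  exact/infiniteP/injects_card_le.
apply: injects_trans (injects_trans (injects_setX BN BN) (injects_trans NNN NB)).
by apply: injects_sub => -[a b] [[[/nDx[]|Ba] [/nDx[]|Bb]] _].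
Qed.

Lemma maximal_pairing_dom_square : injects (D `*` D) D.
Proof.
have [t0 _] := maximal_pairing_dom_neq0.
have [g gP] := choice_on t0 (pairing_total HG).
exists g => [p /gP/(pairing_sub HG)[] //|p p' /set_mem Dp /set_mem Dp' gpp'].
by apply: (pairing_inj HG (gP _ Dp)); rewrite gpp'; exact: gP.
Qed.

Lemma maximal_pairing_dom_large : injects (X `\` D) D.
Proof.
have [d Dd] := maximal_pairing_dom_neq0.
have Dinf := pairing_dom_infinite HG maximal_pairing_dom_neq0.
have [[h hD hi]|//] := injects_total D (X `\` D) d d.
have hDB : injects (h @` D `\` D) D.
  exact: injects_trans (injects_sub (@subDsetl _ _ _)) (injects_image d hi).
exfalso; apply: (maximal_pairing_no_extension (B := h @` D)) => [_ [x Dx <-]|||].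
- exact: hD.
- by exists (h d), d.
- by apply: sub_infinite_set Dinf => x Dx; left.
have DhD : injects D (h @` D) by exists h => // x Dx; exists x.
have hDbool := injects_setU_bool hDB.
have D2D := injects_square_bool d maximal_pairing_dom_square Dinf.
apply: injects_trans (injects_trans (injects_setX hDbool hDbool) (injects_trans D2D DhD)).
by apply: injects_sub => p [].
Qed.

End MaximalPairing.

Lemma injects_square : injects (X `*` X) X.
Proof.
have [G [HG Gmax]] := pairing_graph_exists_maximal.
have [d _] := maximal_pairing_dom_neq0 HG Gmax.
have D2D := injects_square_bool d (maximal_pairing_dom_square HG Gmax)
  (pairing_dom_infinite HG (maximal_pairing_dom_neq0 HG Gmax)).
have XDB := injects_trans (injects_sub (@subsetUr _ (graph_dom G) X))
  (injects_setU_bool (maximal_pairing_dom_large HG Gmax)).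
apply: injects_trans (injects_setX XDB XDB) (injects_trans D2D _).
exact/injects_sub/pairing_domX.
Qed.

End Hessenberg.

Section ShortSequences.
Variables (T : Type) (X : set T).

Definition seqs_of_size (k : nat) : set (seq T) := [set l | size l = k /\ all (mem X) l].

Definition short_seqs (n : nat) : set (seq T) := [set l | (size l < n)%N /\ all (mem X) l].

Lemma short_seqsE n : short_seqs n = \bigcup_(k in `I_n) seqs_of_size k.
Proof.
apply/seteqP; split=> [l [ln Xl]|l [k /= kn [lk Xl]]]; first by exists (size l).
by rewrite /short_seqs /= lk.
Qed.

Lemma seqs_of_size_finite k : finite_set X -> finite_set (seqs_of_size k).
Proof.
move=> Xfin; elim: k => [|k IHk].
  apply: (@sub_finite_set _ _ [set nil]) => [l [/size0nil -> _]|]; first exact: erefl.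
  exact: finite_set1.
apply: (@sub_finite_set _ _ [set p.1 :: p.2 | p in X `*` seqs_of_size k]).
  by case=> [|x l] [//= [<-] /andP[/set_mem Xx Xl]]; exists (x, l).
exact/finite_image/finite_setX.
Qed.

Lemma short_seqs_finite n : finite_set X -> finite_set (short_seqs n).
Proof.
move=> Xfin; rewrite short_seqsE; apply: bigcup_finite; first exact: finite_II.
by move=> k _; exact: seqs_of_size_finite.
Qed.

Hypothesis Xinf : infinite_set X.

Lemma injects_seqs_of_size k : injects (seqs_of_size k) X.
Proof.
have [t0 Xt0] := infinite_setN0 Xinf.
elim: k => [|k IHk].
  by exists (fun=> t0) => // l l' /set_mem[/size0nil-> _] /set_mem[/size0nil->].
have XlX := injects_setX (injects_sub (@subset_refl _ X)) IHk.
apply: injects_trans (injects_trans XlX (injects_square Xinf)).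
exists (fun l => (head t0 l, behead l)) => [[|x l] [//= [<-] /andP[/set_mem Xx Xl]] //|].
by move=> [|x l] [|x' l'] /set_mem[//= _ _] /set_mem[//= _ _] [-> ->].
Qed.

Lemma injects_short_seqs n : injects (short_seqs n) X.
Proof.
have [t0 _] := infinite_setN0 Xinf.
have fk k : exists f, set_fun (seqs_of_size k) X f /\ set_inj (seqs_of_size k) f.
  by have [f ? ?] := injects_seqs_of_size k; exists f.
have [f fP] := choice fk.
have [e eX ei] := card_le_injects t0 (proj1 (infiniteP X) Xinf).
apply: injects_trans (injects_square Xinf).
exists (fun l => (e (size l), f (size l) l)) => [l [_ Xl]|l l'].
  by split; [apply: eX|apply: (fP _).1].
move=> /set_mem[_ Xl] /set_mem[_ Xl'] [el fl].
have sl : size l = size l' by apply: ei; rewrite ?inE.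
by move: fl; rewrite -sl => /(fP (size l)).2; apply; apply/mem_set.
Qed.

End ShortSequences.

Lemma card_lt_of_injects T U I (A : set T) (Y : set U) (u0 : U) :
  infinite_set [set: I] -> ~ ([set: I] #<= Y)%card ->
  finite_set A \/ injects A Y -> card_lt A [set: I].
Proof.
move=> Iinf nIY AY; have [i0 _] := infinite_setN0 Iinf.
have YI : injects Y [set: I].
  by case: (injects_total Y [set: I] u0 i0) => // /injects_card_le.
case: AY => [Afin|AY].
  split; last by move=> /card_le_finite/(_ Afin).
  have [m /card_eqPle[Am _]] := Afin.
  apply: card_le_trans Am (card_le_trans (subset_card_le (@subsetT _ _)) _).
  exact/infiniteP.
split; first exact: injects_card_le (injects_trans AY YI).
by move=> IA; apply: nIY; exact: card_le_trans IA (injects_card_le AY).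
Qed.

(** * Continuous functions and norms on C(K) *)

Section ContinuousFunctions.
Variables (R : realType) (K : topologicalType).
Implicit Types (f g : K -> R).

Lemma cont_cst (a : R) : continuous (fun _ : K => a).
Proof. exact: cst_continuous. Qed.

Lemma cont_add f g : continuous f -> continuous g -> continuous (fun t => f t + g t).
Proof. by move=> cf cg x; have := @continuousD R R^o K f g x (cf x) (cg x). Qed.

Lemma cont_mul f g : continuous f -> continuous g -> continuous (fun t => f t * g t).
Proof. by move=> cf cg x; have := continuousM (cf x) (cg x). Qed.

Lemma cont_scale (a : R) f : continuous f -> continuous (fun t => a * f t).
Proof. by move=> cf; apply: cont_mul => //; exact: cont_cst. Qed.

Lemma cont_opp f : continuous f -> continuous (fun t => - f t).
Proof. by move=> cf x; have := @continuousN R R^o K f x (cf x). Qed.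

Lemma cont_norm f : continuous f -> continuous (fun t => `|f t|).
Proof. by move=> cf x; apply: (continuous_comp (cf x)); exact: (@norm_continuous R R^o). Qed.

Lemma cont_max f g : continuous f -> continuous g -> continuous (fun t => Num.max (f t) (g t)).
Proof. by move=> cf cg x; have := @continuous_max R K f g x (cf x) (cg x). Qed.

Hypothesis cK : compact [set: K].

Lemma supnorm_ub f x : continuous f -> `|f x| <= supnorm f.
Proof.
move=> cf; apply: sup_upper_bound; last by exists x.
apply: compact_has_sup; first by exists `|f x|, x.
by apply: continuous_compact => //; apply: continuous_subspaceT; exact: cont_norm.
Qed.

Variable k0 : K.

Lemma supnorm_le f M : (forall x, `|f x| <= M) -> supnorm f <= M.
Proof. by move=> fM; apply: ge_sup; [exists `|f k0|, k0|move=> _ [x _ <-]]. Qed.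

Lemma supnorm_ge0 f : continuous f -> 0 <= supnorm f.
Proof. by move=> cf; apply: le_trans (supnorm_ub k0 cf). Qed.

Lemma lt_supnorm f r : r < supnorm f -> exists x, r < `|f x|.
Proof.
move=> rf; apply/not_existsP => nr; move: rf; apply/negP; rewrite -leNgt.
by apply: supnorm_le => x; rewrite leNgt; apply/negP => rx; exact: (nr x).
Qed.

End ContinuousFunctions.
Arguments cont_cst {R K} a.
Arguments cont_scale {R K} a {f}.

Section NormOnCK.
Variables (R : realType) (K : topologicalType) (N : (K -> R) -> R).
Hypothesis hN : is_norm_CK N.
Implicit Types (f g x y : K -> R).

Lemma normCKZ a f : continuous f -> N (fun t => a * f t) = `|a| * N f.
Proof. by move=> cf; have [_ [NZ _]] := hN; exact: NZ. Qed.

Lemma normCKD f g : continuous f -> continuous g -> N (fun t => f t + g t) <= N f + N g.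
Proof. by move=> cf cg; have [ND _] := hN; exact: ND. Qed.

Lemma normCK_eq0 f : continuous f -> N f = 0 -> f = (fun _ => 0).
Proof. by move=> cf; have [_ [_ N0]] := hN; exact: N0. Qed.

Lemma normCK0 : N (fun _ => 0) = 0.
Proof. by have := @normCKZ 0 _ (cont_cst 0); rewrite normr0 !mul0r. Qed.

Lemma normCK_ge0 f : continuous f -> 0 <= N f.
Proof.
move=> cf; have := normCKD cf (cont_scale (-1) cf); rewrite normCKZ // normrN normr1 mul1r.
have -> : (fun t => f t + -1 * f t) = (fun _ => 0) by apply: funext => t; rewrite mulN1r subrr.
by rewrite normCK0 => ?; lra.
Qed.

Lemma normCK_convex f g a b : continuous f -> continuous g -> 0 <= a <= 1 ->
  N f <= b -> N g <= b -> N (fun t => a * f t + (1 - a) * g t) <= b.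
Proof.
move=> cf cg /andP[a0 a1] fb gb.
apply: le_trans (normCKD (cont_scale a cf) (cont_scale (1 - a) cg)) _.
rewrite !normCKZ // !ger0_norm ?subr_ge0 //.
have -> : b = a * b + (1 - a) * b by ring.
by apply: lerD; apply: ler_wpM2l; rewrite ?subr_ge0.
Qed.

(* For [m >= 1], [x + y / m] is a convex combination of [x + y] and [x - y];
   for [m < 1], [m * x + y] is one of [x + y] and [y]. *)
Lemma normCK_scale_add x y m b : continuous x -> continuous y ->
  N (fun t => x t + y t) <= b -> N (fun t => x t - y t) <= b -> N y <= b -> 0 <= m ->
  N (fun t => m * x t + y t) <= Num.max m 1 * b.
Proof.
move=> cx cy xyb xyb' yb m0.
have cxy : continuous (fun t => x t + y t) by exact: cont_add.
have cxy' : continuous (fun t => x t - y t) by exact/cont_add/cont_opp.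
case: (lerP 1 m) => m1.
  have m0' : 0 < m by lra.
  have -> : (fun t => m * x t + y t) =
      (fun t => m * ((1 + m^-1) / 2 * (x t + y t) + (1 - (1 + m^-1) / 2) * (x t - y t))).
    by apply: funext => t; field; rewrite gt_eqF.
  rewrite normCKZ; last by apply: cont_add; apply: cont_scale.
  rewrite ger0_norm // ler_wpM2l // normCK_convex //.
  have : m^-1 <= 1 by rewrite invf_le1.
  have : 0 < m^-1 by rewrite invr_gt0.
  by move=> ? ?; apply/andP; split; lra.
rewrite mul1r.
have -> : (fun t => m * x t + y t) = (fun t => m * (x t + y t) + (1 - m) * y t).
  by apply: funext => t; ring.
by apply: normCK_convex => //; apply/andP; split; lra.
Qed.

End NormOnCK.

(** * Families with small signed sums *)

Section SignedSums.
Variables (R : realType) (K : topologicalType) (N : (K -> R) -> R).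
Hypothesis hN : is_norm_CK N.
Variable n : nat.
Hypothesis n_gt0 : (0 < n)%N.

Definition unit_sphere : set (K -> R) := [set f | continuous f /\ N f = 1].

Definition signed (Y : set (K -> R)) : set (R * (K -> R)) :=
  [set p | (p.1 = 1 \/ p.1 = -1) /\ Y p.2].

Definition signed_sum (l : seq (R * (K -> R))) : K -> R :=
  fun t => \sum_(p <- l) p.1 * p.2 t.

Definition admissible (Y : set (K -> R)) (l : seq (R * (K -> R))) :=
  [/\ uniq (map snd l), (size l <= n)%N & all (mem (signed Y)) l].

Definition small_signed_sums (Y : set (K -> R)) := Y `<=` unit_sphere /\
  forall l, admissible Y l -> N (signed_sum l) <= 1 + (size l)%:R / n%:R.

Definition normalize (f : K -> R) : K -> R := fun t => f t / N f.

Definition normalized_short_sums (Y : set (K -> R)) : set (K -> R) :=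
  [set normalize (signed_sum l) | l in
    [set l | admissible Y l /\ (size l < n)%N /\ N (signed_sum l) != 0]].

Definition eps : R := (2 * n)%:R^-1.

Lemma eps_gt0 : 0 < eps.
Proof. by rewrite invr_gt0 ltr0n muln_gt0. Qed.

Lemma eps_lt1 : eps < 1.
Proof. by rewrite invf_lt1 ?ltr0n ?ltr1n ?muln_gt0 // leq_pmulr. Qed.

Lemma signed_sum_nil : signed_sum [::] = (fun _ => 0).
Proof. by apply: funext => t; rewrite /signed_sum big_nil. Qed.

Lemma signed_sum_cons p l : signed_sum (p :: l) = (fun t => p.1 * p.2 t + signed_sum l t).
Proof. by apply: funext => t; rewrite /signed_sum big_cons. Qed.

Lemma signed_sum1 f : signed_sum [:: (1, f)] = f.
Proof. by apply: funext => t; rewrite /signed_sum big_seq1 mul1r. Qed.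

Lemma signed_sum_perm l l' : perm_eq l l' -> signed_sum l = signed_sum l'.
Proof. by move=> ll'; apply: funext => t; rewrite /signed_sum (perm_big _ ll'). Qed.

Lemma signed_sum_cont Y l : Y `<=` unit_sphere -> all (mem (signed Y)) l ->
  continuous (signed_sum l).
Proof.
move=> Ys; elim: l => [|p l IHl] /=; first by rewrite signed_sum_nil => _; exact: cont_cst.
move=> /andP[/set_mem[_ /Ys[cp _]] /IHl cl]; rewrite signed_sum_cons.
exact/cont_add/cl/cont_scale.
Qed.

Lemma normalize_sphere f : continuous f -> N f != 0 -> unit_sphere (normalize f).
Proof.
move=> cf Nf0; have -> : normalize f = (fun t => (N f)^-1 * f t).
  by apply: funext => t; rewrite /normalize mulrC.
split; first exact: cont_scale.
by rewrite normCKZ // ger0_norm ?invr_ge0 ?normCK_ge0 // mulVf.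
Qed.

Lemma normalized_short_sums_sphere Y : Y `<=` unit_sphere ->
  normalized_short_sums Y `<=` unit_sphere.
Proof.
move=> Ys _ [l [[_ _ Yl] [_ Nl0]] <-]; apply: normalize_sphere => //.
exact: signed_sum_cont Yl.
Qed.

Lemma normCK_add_signed x y (b sigma : R) : sigma = 1 \/ sigma = -1 ->
  N (fun t => x t + y t) <= b -> N (fun t => x t - y t) <= b ->
  N (fun t => x t + sigma * y t) <= b /\ N (fun t => x t - sigma * y t) <= b.
Proof.
case=> -> xyb xyb'; split.
- by under eq_fun do rewrite mul1r.
- by under eq_fun do rewrite mul1r.
- by under eq_fun do rewrite mulN1r.
- by under eq_fun do rewrite mulN1r opprK.
Qed.

(* Writing [s = m * x] with [N x = 1], the bound is [max m 1 * (1 + eps)], and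
   [m <= 1 + k/n] with [k/n < 1]. *)
Lemma normCK_signed_step s y (sigma : R) (k : nat) :
  continuous s -> continuous y -> N y = 1 -> sigma = 1 \/ sigma = -1 -> (k < n)%N ->
  N s <= 1 + k%:R / n%:R ->
  (N s != 0 -> N (fun t => normalize s t + y t) <= 1 + eps /\
               N (fun t => normalize s t - y t) <= 1 + eps) ->
  N (fun t => sigma * y t + s t) <= 1 + k.+1%:R / n%:R.
Proof.
move=> cs cy Ny sigma1 kn; set m := N s; set u := n%:R^-1 => sk sy.
have u0 : 0 < u by rewrite invr_gt0 ltr0n.
have ku : k%:R * u + u <= 1.
  have : k.+1%:R * u <= 1 by rewrite ler_pdivrMr ?ltr0n // mul1r ler_nat.
  by rewrite -natr1 mulrDl mul1r.
have ku0 : 0 <= k%:R * u by rewrite mulr_ge0 ?ler0n ?ltW.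
have Nsy : N (fun t => sigma * y t) = 1.
  by rewrite normCKZ // Ny mulr1; case: sigma1 => ->; rewrite ?normrN normr1.
rewrite -natr1 mulrDl mul1r.
case: (eqVneq m 0) => [m0|m0].
  have -> : (fun t => sigma * y t + s t) = (fun t => sigma * y t).
    by apply: funext => t; rewrite (normCK_eq0 hN cs m0) addr0.
  by rewrite Nsy; lra.
have cx : continuous (normalize s) by have [] := normalize_sphere cs m0.
have [xy xy'] := normCK_add_signed sigma1 (sy m0).1 (sy m0).2.
have -> : (fun t => sigma * y t + s t) = (fun t => m * normalize s t + sigma * y t).
  by apply: funext => t; rewrite /normalize -/m [m * _]mulrC divfK // addrC.
have epsE : eps = u / 2 by rewrite /eps natrM invfM mulrC.
have Nsy' : N (fun t => sigma * y t) <= 1 + eps by rewrite Nsy epsE; lra.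
have := normCK_scale_add hN cx (cont_scale sigma cy) xy xy' Nsy' (normCK_ge0 hN cs).
move=> /le_trans; apply.
by rewrite epsE; case: (lerP 1 m) => m1; nra.
Qed.

Lemma admissible_setU1 Y y l : admissible (Y `|` [set y]) l -> y \notin map snd l ->
  admissible Y l.
Proof.
case=> ul ln Yl ny; split=> //; apply/allP => p pl.
have /set_mem[sp [Yp|yp]] := allP Yl p pl; first exact: mem_set.
by move: ny; rewrite -yp map_f.
Qed.

Lemma small_signed_sums_extend Y y : small_signed_sums Y -> unit_sphere y ->
  (forall x, normalized_short_sums Y x ->
     N (fun t => x t + y t) <= 1 + eps /\ N (fun t => x t - y t) <= 1 + eps) ->
  small_signed_sums (Y `|` [set y]).
Proof.
move=> [Ys YN] [cy Ny] Hy; split=> [f [/Ys|->]//|l ladm].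
have [ul ln Yl] := ladm.
have [/mapP[p pl py]|ny] := boolP (y \in map snd l); last exact/YN/(admissible_setU1 ladm).
have pr := perm_to_rem pl; set l' := rem p l in pr *.
have /set_mem[sp _] := allP Yl p pl.
have szl : size l = (size l').+1 by rewrite (perm_size pr).
have l'n : (size l' < n)%N by rewrite -szl.
move: ul; rewrite (perm_uniq (perm_map snd pr)) /= => /andP[ny' ul'].
have adm' : admissible Y l'.
  apply: (admissible_setU1 (y := y)); last by rewrite py.
  split=> //; first exact: ltnW.
  by apply/allP => q /mem_rem ql; exact: allP Yl q ql.
have cs : continuous (signed_sum l') by case: adm' => _ _; exact: signed_sum_cont.
rewrite (signed_sum_perm pr) signed_sum_cons szl -py.
apply: normCK_signed_step => // [|s0]; first exact: YN.
by apply: Hy; exists l'.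
Qed.

Lemma signedS (Y Y' : set (K -> R)) : Y `<=` Y' -> signed Y `<=` signed Y'.
Proof. by move=> YY' p [? ?]; split=> //; exact: YY'. Qed.

Lemma signed_chain (F : set (set (K -> R))) l : total_on F subset -> l != [::] ->
  all (mem (signed (\bigcup_(Y in F) Y))) l -> exists2 Y, F Y & all (mem (signed Y)) l.
Proof.
move=> Ftot; elim: l => [//|p [|q l] IHl] _ /andP[/set_mem[sp [Y1 F1 Y1p]] Yl].
  by exists Y1 => //=; rewrite andbT; apply: mem_set.
have [Y2 F2 Y2l] := IHl isT Yl.
have Y1p' : signed Y1 p by [].
have Y2l' r : r \in q :: l -> signed Y2 r by move=> /(allP Y2l)/set_mem.
case: (Ftot _ _ F1 F2) => sub; [exists Y2|exists Y1] => //; apply/allP => r;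
  rewrite in_cons => /orP[/eqP->|/Y2l' Y2r]; apply: mem_set.
- exact: signedS sub _ Y1p'.
- exact: Y2r.
- exact: Y1p'.
- exact: signedS sub _ Y2r.
Qed.

Lemma small_signed_sums_maximal :
  exists Y0, small_signed_sums Y0 /\ forall Y', Y0 `<` Y' -> ~ small_signed_sums Y'.
Proof.
apply: Zorn_bigcup => F FP Ftot; split=> [f [Y /FP[Ys _] /Ys]//|l [ul ln Fl]].
have [->|l0] := eqVneq l [::].
  by rewrite signed_sum_nil (normCK0 hN) mul0r addr0.
have [Y FY Yl] := signed_chain Ftot l0 Fl.
by apply: (FP Y FY).2; split.
Qed.

End SignedSums.

Section LargeFamily.
Variables (R : realType) (K : topologicalType) (N : (K -> R) -> R) (n : nat).
Hypotheses (hN : is_norm_CK N) (n_gt1 : (1 < n)%N).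

Lemma injects_signed (Y : set (K -> R)) : infinite_set Y -> injects (signed Y) Y.
Proof.
move=> Yinf; have [e eY ei] := card_le_injects (fun=> 0) (proj1 (infiniteP _) Yinf).
have e01 : e 0%N != e 1%N by apply/eqP => /ei-/(_ (mem_set I) (mem_set I)).
have m1 : ((-1 : R) == 1) = false by apply/negbTE/eqP => ?; lra.
apply: injects_trans (injects_square Yinf).
exists (fun p => (if p.1 == 1 then e 0%N else e 1%N, p.2)) => [p [_ Yp]|].
  by split=> //=; case: ifP => _; apply: eY.
move=> [a f] [b g] /set_mem[/= sa _] /set_mem[/= sb _] [E ->]; congr pair.
by case: sa sb E => -> [] -> //=; rewrite eqxx m1 => E; move: e01; rewrite E eqxx.
Qed.

Lemma normalized_short_sums_small (Y : set (K -> R)) :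
  finite_set (normalized_short_sums N n Y) \/ injects (normalized_short_sums N n Y) Y.
Proof.
have sub : normalized_short_sums N n Y `<=`
    (fun l => normalize N (signed_sum l)) @` short_seqs (signed Y) n.
  by move=> _ [l [[_ _ Yl] [ln _]] <-]; exists l.
have [Yfin|Yinf] := pselect (finite_set Y).
  left; apply: sub_finite_set sub _; apply/finite_image/short_seqs_finite.
  apply: (@sub_finite_set _ _ ([set 1; -1] `*` Y)) => [p [s1 Yp] //|].
  exact/finite_setX/Yfin/finite_set2.
have Sinf : infinite_set (signed Y).
  move=> /card_le_finite Sfin; apply: Yinf; apply: Sfin; apply: injects_card_le.
  by exists (fun f => (1, f)) => [f Yf|f g _ _ [->]] //; split=> //; left.
right; apply: injects_trans (injects_sub sub) _.
apply: injects_trans (card_le_injects [::] (card_image_le _ _)) _.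
exact: injects_trans (injects_short_seqs Sinf n) (injects_signed Yinf).
Qed.

Lemma exists_large_small_signed_sums (I : Type) : ASQ_lt N I -> infinite_set [set: I] ->
  exists Y0, small_signed_sums N n Y0 /\ ([set: I] #<= Y0)%card.
Proof.
move=> hasq Iinf; have n_gt0 := ltnW n_gt1.
have [Y0 [HY0 Y0max]] := small_signed_sums_maximal hN n.
exists Y0; split=> //; apply: contrapT => nIY.
have Asub := normalized_short_sums_sphere hN (n := n) HY0.1.
have Alt := card_lt_of_injects (fun=> 0) Iinf nIY (normalized_short_sums_small Y0).
have [y [cy [Ny Hy]]] := hasq _ Asub Alt _ (eps_gt0 R n_gt0).
have nY0y : ~ Y0 y.
  move=> Y0y; have Ay : normalized_short_sums N n Y0 y.
    exists [:: (1, y)]; last by apply: funext => t; rewrite /normalize signed_sum1 Ny divr1.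
    split; last by rewrite signed_sum1 Ny oner_neq0.
    by split=> //=; rewrite andbT; apply: mem_set; split=> //; left.
  have := (Hy y Ay).1; rewrite (_ : (fun t => y t + y t) = (fun t => 2 * y t)).
    by rewrite normCKZ // Ny mulr1 ger0_norm //; have := eps_lt1 R n_gt0; lra.
  by apply: funext => t; rewrite mulr2n mulrDl mul1r.
apply: (Y0max (Y0 `|` [set y])); last exact: small_signed_sums_extend.
by split=> [f Y0f|/(_ y (or_intror erefl))]; [left|].
Qed.

End LargeFamily.

(** * Disjoint peaks and copies of c_0 *)

Section Bump.
Variables (R : realType) (K : topologicalType) (delta : R).

Definition bump (s : seq (K -> R)) (t : K) : R := \prod_(z <- s) Num.max (`|z t| - delta) 0.

Lemma bump_cont s : (forall z, z \in s -> continuous z) -> continuous (bump s).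
Proof.
elim: s => [|z s IHs] zc.
  rewrite (_ : bump [::] = fun=> 1); first exact: cont_cst.
  by apply: funext => t; rewrite /bump big_nil.
rewrite (_ : bump _ = fun t => Num.max (`|z t| - delta) 0 * bump s t); last first.
  by apply: funext => t; rewrite /bump big_cons.
apply: cont_mul; last by apply: IHs => y ys; apply: zc; rewrite in_cons ys orbT.
apply/cont_max/cont_cst/cont_add/cont_cst/cont_norm/zc.
exact: mem_head.
Qed.

Lemma bump_ge0 s t : 0 <= bump s t.
Proof. by apply: prodr_ge0 => z _; rewrite le_max lexx orbT. Qed.

Lemma bump_neq0 s t : (bump s t != 0) = all (fun z => delta < `|z t|) s.
Proof.
rewrite prodf_seq_neq0; apply: eq_all => z /=.
by rewrite -subr_gt0; case: (lerP (`|z t| - delta) 0) => h; rewrite ?eqxx // gt_eqF.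
Qed.

End Bump.

Lemma normalized_peak (R : realType) (K : topologicalType) (f : K -> R) :
  compact [set: K] -> continuous f -> (forall t, 0 <= f t) -> (exists t, 0 < f t) ->
  [/\ continuous (fun t => f t / supnorm f), forall t, 0 <= f t / supnorm f <= 1
    & forall r, r < 1 -> exists t, r < f t / supnorm f].
Proof.
move=> cK cf f0 [k0 fk0].
have fsup t : f t <= supnorm f by have := supnorm_ub cK t cf; rewrite ger0_norm.
have sf0 : 0 < supnorm f by apply: lt_le_trans fk0 (fsup k0).
split=> [|t|r r1]; first exact/cont_mul/cont_cst.
  by rewrite divr_ge0 ?(ltW sf0) //= ler_pdivrMr // mul1r.
have /(lt_supnorm k0) [t rt] : r * supnorm f < supnorm f by rewrite gtr_pMl.
by exists t; rewrite ltr_pdivlMr // -(ger0_norm (f0 t)).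
Qed.

Definition disjoint_peaks (R : realType) (K : topologicalType) (J : Type) (G : J -> K -> R) :=
  [/\ forall i, continuous (G i), forall i t, 0 <= G i t <= 1,
      forall i r, r < 1 -> exists t, r < G i t &
      forall i j t, G i t != 0 -> G j t != 0 -> i = j].

Section DisjointPeaksEmbedding.
Variables (R : realType) (K : topologicalType) (J : Type) (G : J -> K -> R).
Hypotheses (cK : compact [set: K]) (hG : disjoint_peaks G).

(* At each point at most one [G i] is nonzero, so the sum [\sum_i x i * G i t]
   has at most one nonzero term, which [cid] selects. *)
Definition peak_sum (x : J -> R) (t : K) : R :=
  match pselect (exists i, G i t != 0) with
  | left e => x (projT1 (cid e)) * G (projT1 (cid e)) t
  | right _ => 0
  end.

Lemma peak_sumE x t i : G i t != 0 -> peak_sum x t = x i * G i t.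
Proof.
move=> Git; rewrite /peak_sum; case: pselect => [e|ne]; last by case: ne; exists i.
by have [_ _ _ Gdisj] := hG; rewrite -(Gdisj _ _ _ Git (projT2 (cid e))).
Qed.

Lemma peak_sum0 x t : (forall i, G i t = 0) -> peak_sum x t = 0.
Proof.
move=> G0; rewrite /peak_sum; case: pselect => // e.
by have := projT2 (cid e); rewrite G0 eqxx.
Qed.

Lemma peak_sum_cases x t : (exists2 i, G i t != 0 & peak_sum x t = x i * G i t) \/
  ((forall i, G i t = 0) /\ peak_sum x t = 0).
Proof.
have [[i Git]|nG] := pselect (exists i, G i t != 0).
  by left; exists i => //; exact: peak_sumE.
have G0 i : G i t = 0 by case: (eqVneq (G i t) 0) => // Git; case: nG; exists i.
by right; rewrite peak_sum0.
Qed.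

Lemma peak_sum_linear a x y :
  peak_sum (fun i => a * x i + y i) = (fun t => a * peak_sum x t + peak_sum y t).
Proof.
apply: funext => t; have [[i Git _]|[G0 _]] := peak_sum_cases x t.
  by rewrite !(peak_sumE _ Git); ring.
by rewrite !peak_sum0 // mulr0 addr0.
Qed.

Lemma peak_sum_cont_support x i t0 : G i t0 != 0 -> {for t0, continuous (peak_sum x)}.
Proof.
have [Gc _ _ _] := hG; move=> Git0.
have nearG : \forall t \near t0, G i t != 0 := @cvgr_neq0 _ R^o _ _ _ (G i) _ (Gc i t0) Git0.
have near_eq : {near t0, (fun t => x i * G i t) =1 peak_sum x}.
  by near=> t; rewrite (peak_sumE x (_ : G i t != 0)) //; near: t; exact: nearG.
apply: cvg_trans (near_eq_cvg near_eq) _.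
by rewrite (peak_sumE x Git0); exact: (cont_scale _ (Gc i)).
Unshelve. all: by end_near.
Qed.

Lemma peak_sum_cont_zero x t0 : c0 x -> (forall i, G i t0 = 0) ->
  {for t0, continuous (peak_sum x)}.
Proof.
have [Gc G01 _ _] := hG; move=> cx G0.
rewrite /prop_for /continuous_at (peak_sum0 x G0); apply/cvgrPdist_lt => e e0.
(* [closed_bigcup] needs a choice structure on the indices. *)
pose F : set {classic J} := [set i | e <= `|x i|].
pose Z := \bigcup_(i in F) [set t | e <= `|x i| * G i t].
have Zclosed : closed Z.
  apply: closed_bigcup => [|i _]; first exact: cx.
  exact: (proj1 (@continuous_closedP K R _) (cont_scale _ (Gc i)) _ (@closed_ge R e)).
have Zt0 : ~ Z t0 by move=> [i _ /=]; rewrite G0 mulr0 leNgt e0.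
have : nbhs t0 (~` Z) by apply: open_nbhs_nbhs; split=> //; exact: closed_openC.
apply: filterS => t nZt; rewrite sub0r normrN.
have [[i Git ->]|[_ ->]] := peak_sum_cases x t; last by rewrite normr0.
have /andP[g0 g1] := G01 i t; rewrite normrM (ger0_norm g0).
have [exi|xie] := lerP e `|x i|; last by apply: le_lt_trans xie; rewrite ler_piMr.
by rewrite ltNge; apply/negP => exG; apply: nZt; exists i.
Qed.

Lemma peak_sum_cont x : c0 x -> continuous (peak_sum x).
Proof.
move=> cx t0; have [[i Git0 _]|[G0 _]] := peak_sum_cases x t0.
  exact: peak_sum_cont_support Git0.
exact: peak_sum_cont_zero.
Qed.

Lemma abs_le_supnorm_peak_sum x i : continuous (peak_sum x) ->
  `|x i| <= supnorm (peak_sum x).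
Proof.
have [_ G01 Gpeak _] := hG; move=> cT; have [k0 _] := Gpeak i 0 ltr01.
have S0 := supnorm_ge0 cK k0 cT; rewrite leNgt; apply/negP => Sx.
have xi0 : 0 < `|x i| by apply: le_lt_trans Sx.
have [t rt] : exists t, supnorm (peak_sum x) / `|x i| < G i t.
  by apply: Gpeak; rewrite ltr_pdivrMr // mul1r.
have Git : G i t != 0 by rewrite gt_eqF // (le_lt_trans _ rt) // divr_ge0.
have := supnorm_ub cK t cT; rewrite (peak_sumE x Git) normrM.
rewrite (ger0_norm (proj1 (andP (G01 i t)))) leNgt => /negP; apply.
by rewrite mulrC -ltr_pdivrMr.
Qed.

Lemma peak_sum_isometry (i0 : J) x : c0 x -> supnorm (peak_sum x) = c0norm x.
Proof.
have [_ G01 Gpeak _] := hG; move=> cx; have [k0 _] := Gpeak i0 0 ltr01.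
have cT := peak_sum_cont cx.
have xub i : `|x i| <= c0norm x.
  apply: ub_le_sup; last by exists i.
  by exists (supnorm (peak_sum x)) => _ [j _ <-]; exact: abs_le_supnorm_peak_sum.
apply/eqP; rewrite eq_le; apply/andP; split.
  apply: (supnorm_le k0) => t; have [[i Git ->]|[_ ->]] := peak_sum_cases x t.
    have /andP[g0 g1] := G01 i t; rewrite normrM (ger0_norm g0).
    by apply: le_trans (xub i); rewrite ler_piMr.
  by rewrite normr0 (le_trans _ (xub i0)).
apply: ge_sup; first by exists `|x i0|, i0.
by move=> _ [i _ <-]; exact: abs_le_supnorm_peak_sum.
Qed.

Lemma contains_c0_of_disjoint_peaks (i0 : J) : contains_c0 R K J.
Proof.
exists peak_sum; split; first exact: peak_sum_cont.
split=> [a x y _ _|]; first exact: peak_sum_linear.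
exists 1, 1; do 2 split=> //.
by move=> x cx; rewrite mul1r (peak_sum_isometry i0 cx) lexx.
Qed.

End DisjointPeaksEmbedding.

(** * Peak cliques *)

Lemma size_mul_le_sum (R : numDomainType) (T : eqType) (s : seq T) (F : T -> R) (d : R) :
  (forall z, z \in s -> d <= F z) -> (size s)%:R * d <= \sum_(z <- s) F z.
Proof.
elim: s => [|z s IHs] sF; first by rewrite big_nil mul0r.
rewrite big_cons /= -natr1 mulrDl mul1r addrC lerD ?sF ?mem_head //.
by apply: IHs => w ws; apply: sF; rewrite in_cons ws orbT.
Qed.

Section Peaks.
Variables (R : realType) (K : topologicalType) (N : (K -> R) -> R).
Hypotheses (cK : compact [set: K]) (k0 : K).
Variables (c C : R) (n : nat).
Let delta := (2 * C)^-1.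
Hypotheses (c_gt0 : 0 < c) (C_gt0 : 0 < C)
  (hcC : forall f, continuous f -> c * supnorm f <= N f /\ N f <= C * supnorm f)
  (hn : 2 < c * (n%:R * delta)).
Variable Y0 : set (K -> R).
Hypothesis hY0 : small_signed_sums N n Y0.

Definition peak_region (S : set (K -> R)) : set K := [set t | forall z, S z -> delta < `|z t|].

Definition peak_clique (y : K -> R) (l : seq (K -> R)) :=
  [/\ uniq l, forall z, z \in l -> Y0 z, y \in l & peak_region [set z | z \in l] !=set0].

Lemma exists_peak y : Y0 y -> exists t, delta < `|y t|.
Proof.
move=> Y0y; have [cy Ny] := hY0.1 y Y0y; apply: (lt_supnorm k0).
have := (hcC cy).2; rewrite Ny -ler_pdivrMl // mulr1 /delta invfM.
have : 0 < C^-1 by rewrite invr_gt0.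
by move=> ? ?; lra.
Qed.

(* Signed by their values at [q], [n] of them would sum to more than [2 / c]
   in sup norm, hence to more than [2] in norm. *)
Lemma few_common_peaks l q : uniq l -> (forall z, z \in l -> Y0 z) ->
  peak_region [set z | z \in l] q -> (size l < n)%N.
Proof.
move=> ul lY lq; rewrite ltnNge; apply/negP => nl.
have n0 : (0 < n)%N.
  by rewrite lt0n; apply/eqP => n0; move: hn; rewrite n0 mul0r mulr0 ltNge ler0n.
pose l1 := take n l.
have sl1 : size l1 = n by rewrite size_takel.
have l1l z : z \in l1 -> z \in l by apply: mem_take.
pose sgn (v : R) : R := if 0 <= v then 1 else -1.
pose L := [seq (sgn (z q), z) | z <- l1].
have mL : map snd L = l1 by rewrite -map_comp map_id.
have YL : all (mem (signed Y0)) L.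
  apply/allP => _ /mapP[z zl1 ->]; apply: mem_set; split; last exact/lY/l1l.
  by rewrite /sgn; case: ifP => _; [left|right].
have admL : admissible n Y0 L by split; rewrite ?mL ?take_uniq ?size_map ?sl1.
have NL := hY0.2 L admL.
rewrite size_map sl1 divff ?lt0r_neq0 ?ltr0n // in NL.
have cL := signed_sum_cont hY0.1 YL.
have Lq : n%:R * delta <= signed_sum L q.
  rewrite /signed_sum big_map -sl1; apply: size_mul_le_sum => z /l1l zl /=.
  rewrite /sgn; case: ifP => [zq0|/negbT]; first by rewrite mul1r -(ger0_norm zq0) ltW ?lq.
  by rewrite -ltNge => zq0; rewrite mulN1r -(ltr0_norm zq0) ltW ?lq.
have := le_trans (le_trans Lq (ler_norm _)) (supnorm_ub cK q cL).
rewrite -(ler_pM2l c_gt0) => /le_trans/(_ (le_trans (hcC cL).1 NL)).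
by rewrite leNgt hn.
Qed.

Lemma peak_clique_size y l : peak_clique y l -> (size l < n)%N.
Proof. by case=> ul lY _ [q lq]; exact: few_common_peaks ul lY lq. Qed.

Lemma exists_maximal_peak_clique y : Y0 y ->
  exists l, peak_clique y l /\ forall l', peak_clique y l' -> (size l' <= size l)%N.
Proof.
move=> Y0y; pose P k := `[< exists l, peak_clique y l /\ size l = k >].
have P1 : P 1%N.
  apply/asboolP; exists [:: y]; split=> //; split=> //.
  - by move=> z; rewrite inE => /eqP->.
  - exact: mem_head.
  by have [t yt] := exists_peak Y0y; exists t => z /=; rewrite inE => /eqP->.
have Pn k : P k -> (k <= n)%N.
  by move=> /asboolP[l [yl <-]]; exact/ltnW/(peak_clique_size yl).
have [k /asboolP[l [yl <-]] lmax] := ex_maxnP (ex_intro P 1%N P1) Pn.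
by exists l; split=> // l' yl'; apply: lmax; apply/asboolP; exists l'.
Qed.

Section Cells.
Variable L : (K -> R) -> seq (K -> R).
Hypothesis hL : forall y, Y0 y ->
  peak_clique y (L y) /\ forall l', peak_clique y l' -> (size l' <= size (L y))%N.
Let cell y : set (K -> R) := [set z | z \in L y].

Lemma small_outside_cell y z t : Y0 y -> Y0 z -> z \notin L y ->
  peak_region (cell y) t -> `|z t| <= delta.
Proof.
move=> Y0y Y0z zy ty; rewrite leNgt; apply/negP => zt.
have [[uy yY0 yy _] ymax] := hL Y0y.
suff /ymax : peak_clique y (z :: L y) by rewrite /= ltnn.
split=> /=; first by rewrite zy.
- by move=> w; rewrite in_cons => /orP[/eqP->|/yY0].
- by rewrite in_cons yy orbT.
- by exists t => w /=; rewrite in_cons => /orP[/eqP->|/ty].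
Qed.

Lemma peak_region_cell_eq y y' t : Y0 y -> Y0 y' ->
  peak_region (cell y) t -> peak_region (cell y') t -> cell y = cell y'.
Proof.
have sub a b : Y0 a -> Y0 b -> peak_region (cell a) t -> peak_region (cell b) t ->
    cell a `<=` cell b.
  move=> Y0a Y0b ta tb z /= za; apply: contraT => zb.
  have [[_ aY0 _ _] _] := hL Y0a.
  by have := small_outside_cell Y0b (aY0 _ za) zb tb; rewrite leNgt ta.
by move=> Y0y Y0y' ty ty'; apply/seteqP; split; apply: sub.
Qed.

Lemma injects_cells_index : injects Y0 ((cell @` Y0) `*` `I_n).
Proof.
have cellP m : (cell @` Y0) m -> exists y, Y0 y /\ cell y = m by case=> y Y0y <-; exists y.
have [rep repP] := choice_on (fun=> 0) cellP.
have yLrep y : Y0 y -> Y0 (rep (cell y)) /\ y \in L (rep (cell y)).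
  move=> Y0y; have [Y0r cr] := repP (cell y) (ex_intro2 _ _ y Y0y erefl).
  split=> //; suff : cell (rep (cell y)) y by [].
  by rewrite cr /=; have [[]] := hL Y0y.
exists (fun y => (cell y, index y (L (rep (cell y))))) => [y Y0y|y y'].
  split; first by exists y.
  have [Y0r yr] := yLrep y Y0y.
  apply: leq_trans (peak_clique_size (hL Y0r).1).
  by rewrite /= ltnS ltnW // index_mem.
move=> /set_mem Y0y /set_mem Y0y' [cyy']; rewrite -cyy' => iyy'.
have [_ yr] := yLrep y Y0y; have [_] := yLrep y' Y0y'; rewrite -cyy' => y'r.
by rewrite -(nth_index 0 yr) iyy' (nth_index 0 y'r).
Qed.

Lemma exists_cell_transversal (J : Type) :
  ([set: J] #<= Y0)%card -> infinite_set [set: J] ->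
  exists y : J -> K -> R, (forall i, Y0 (y i)) /\ forall i j, cell (y i) = cell (y j) -> i = j.
Proof.
move=> JY0 Jinf; set M := cell @` Y0.
have JY0' := card_le_injects (fun=> 0) JY0.
have [iota iM ii] : injects [set: J] M.
  have [Mfin|Minf] := pselect (finite_set M).
    exfalso; apply/Jinf/(card_le_finite (injects_card_le JY0')).
    apply: card_le_finite (injects_card_le injects_cells_index) _.
    exact/finite_setX/finite_II.
  apply: injects_trans JY0' (injects_trans injects_cells_index _).
  apply: injects_trans (injects_square Minf); apply: injects_setX; first exact: injects_sub.
  have NM := card_le_injects set0 (proj1 (infiniteP _) Minf).
  exact: injects_trans (injects_sub (@subsetT _ _)) NM.
have cellP m : M m -> exists y, Y0 y /\ cell y = m by case=> y Y0y <-; exists y.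
have [rep repP] := choice_on (fun=> 0) cellP.
exists (rep \o iota); split=> [i|i j /=]; first exact: (repP _ (iM i I)).1.
rewrite (repP _ (iM i I)).2 (repP _ (iM j I)).2; apply: ii; exact: mem_set.
Qed.

End Cells.

Lemma exists_disjoint_peaks (J : Type) : ([set: J] #<= Y0)%card -> infinite_set [set: J] ->
  exists G : J -> K -> R, disjoint_peaks G.
Proof.
move=> JY0 Jinf; have [L hL] := choice_on [::] exists_maximal_peak_clique.
have [y [Y0y ycell]] := exists_cell_transversal hL JY0 Jinf.
pose f i := bump delta (L (y i)).
have LY0 i z : z \in L (y i) -> Y0 z by have [[_ ? _ _] _] := hL _ (Y0y i); auto.
have fc i : continuous (f i) by apply: bump_cont => z /LY0/hY0.1[].
have f_neq0 i t : f i t != 0 -> peak_region [set z | z \in L (y i)] t.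
  by rewrite /f bump_neq0 => /allP fit z /fit.
have fpos i : exists t, 0 < f i t.
  have [[_ _ _ [t Lt]] _] := hL _ (Y0y i); exists t.
  by rewrite lt0r bump_ge0 andbT /f bump_neq0; apply/allP => z /Lt.
exists (fun i t => f i t / supnorm (f i)).
have nf i := normalized_peak cK (fc i) (bump_ge0 _ _) (fpos i).
split=> [i|i t|i|i j t]; try by have [] := nf i.
rewrite !mulf_eq0 !negb_or => /andP[/f_neq0 ti _] /andP[/f_neq0 tj _].
exact/ycell/(peak_region_cell_eq hL (Y0y i) (Y0y j) ti tj).
Qed.

End Peaks.

Lemma ASQ_lt_domain_nonempty (R : realType) (K : topologicalType) (N : (K -> R) -> R)
    (I : Type) : is_norm_CK N -> ASQ_lt N I -> infinite_set [set: I] -> [set: K] !=set0.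
Proof.
move=> hN hasq Iinf; apply: contrapT => K0.
have I0 : card_lt (@set0 (K -> R)) [set: I].
  split=> // /card_le0P I0; have [i _] := infinite_setN0 Iinf.
  by have : [set: I] i by []; rewrite I0.
have [y [_ [Ny _]]] := hasq set0 (@sub0set _ _) I0 1 ltr01.
have y0 : y = fun=> 0 by apply: funext => t; case: K0; exists t.
by move: Ny; rewrite y0 normCK0 // => /eqP; rewrite eq_sym oner_eq0.
Qed.

Lemma exists_nat_mul_gt (R : archiFieldType) (a b : R) :
  0 < b -> exists n, (1 < n)%N /\ a < n%:R * b.
Proof.
move=> b0; pose x := Num.max 0 (a / b); have x0 : 0 <= x by rewrite le_max lexx.
exists (Num.Def.archi_bound x + 2)%N; split; first by rewrite addn2.
rewrite -ltr_pdivrMr //.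
apply: le_lt_trans (_ : a / b <= x) _; first by rewrite le_max lexx orbT.
by apply: lt_le_trans (archi_boundP x0) _; rewrite ler_nat leq_addr.
Qed.

(* The infinite cardinal kappa is represented by a type I with |I| = kappa. *)
Theorem theorem3p3 (R : realType) (K : topologicalType)
    (hK : hausdorff_space K) (cK : compact [set: K])
    (I : Type) (hI : infinite_set [set: I])
    (N : (K -> R) -> R) (hN : equiv_norm_CK N) (hasq : ASQ_lt N I) :
  contains_c0 R K I.
Proof.
have [hN' [c [C [c_gt0 [C_gt0 hcC]]]]] := hN.
have [k0 _] := ASQ_lt_domain_nonempty hN' hasq hI.
have [n [n_gt1 hn]] : exists n, (1 < n)%N /\ 2 < c * (n%:R * (2 * C)^-1).
  have delta_gt0 : 0 < (2 * C)^-1 by rewrite invr_gt0 mulr_gt0.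
  have [n [n_gt1 hn]] := exists_nat_mul_gt (2 / c) delta_gt0.
  by exists n; split=> //; rewrite -ltr_pdivrMl // mulrC.
have [Y0 [hY0 IY0]] := exists_large_small_signed_sums hN' n_gt1 hasq hI.
have [G hG] := exists_disjoint_peaks cK k0 c_gt0 C_gt0 hcC hn hY0 IY0 hI.
have [i0 _] := infinite_setN0 hI.
exact: contains_c0_of_disjoint_peaks cK hG i0.
Qed.
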